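(* Let $n=n_1+n_2$ with integers $n_1,n_2\geq 1$, and let $f\colon \mathbb{F}_{2^{n_1}}\times\mathbb{F}_{2^{n_2}}\to\mathbb{F}_2$ be an $n$-variable Boolean function with bivariate representation $$f(x,y)=\sum_{i=0}^{2^{n_1}-1}\sum_{j=0}^{2^{n_2}-1}f_{i,j}x^iy^j,\qquad f_{i,j}\in\mathbb{F}_{2^{[n_1,n_2]}}.$$ Then $$\deg f=\max_{0\leq i\leq 2^{n_1}-1,\ 0\leq j\leq 2^{n_2}-1}\{\mathrm{wt}_{n_1}(i)+\mathrm{wt}_{n_2}(j)\mid f_{i,j}\neq 0\}.$$
   Context: $[n_1,n_2]$ denotes the least common multiple of $n_1$ and $n_2$, so $\mathbb{F}_{2^{n_1}}$ and $\mathbb{F}_{2^{n_2}}$ are subfields of $\mathbb{F}_{2^{[n_1,n_2]}}$. The additive group $\mathbb{F}_{2^{n_1}}\times\mathbb{F}_{2^{n_2}}$ is an $n$-dimensional $\mathbb{F}_2$-vector space, so Boolean functions on it are $n$-variable Boolean functions. The bivariate representation of $f$ is the unique polynomial $\sum_{i=0}^{2^{n_1}-1}\sum_{j=0}^{2^{n_2}-1}f_{i,j}x^iy^j$ with coefficients in $\mathbb{F}_{2^{[n_1,n_2]}}$ that agrees with $f$ on all $(x,y)\in\mathbb{F}_{2^{n_1}}\times\mathbb{F}_{2^{n_2}}$ (obtained by Lagrange interpolation). The algebraic degree $\deg f$ is the degree of the algebraic normal form of $f$ as a function of the $n$ binary coordinates $x_1,\dots,x_{n_1},y_1,\dots,y_{n_2}$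 obtained by writing $x=\sum x_i\alpha_i$, $y=\sum y_j\beta_j$ for $\mathbb{F}_2$-bases $\{\alpha_i\}$, $\{\beta_j\}$ (independent of the bases chosen). For an integer $0\le i\le 2^k-1$, $\mathrm{wt}_k(i)$ denotes the number of $1$'s in the binary expansion of $i$ (so $\mathrm{wt}_k(2^k-1)=k$). *)

From HB Require Import structures.
From mathcomp Require Import all_boot all_order all_algebra all_field.
Set Implicit Arguments. Unset Strict Implicit. Unset Printing Implicit Defensive.
Import GRing.Theory.
Local Open Scope ring_scope.

(* The subfield F_{2^k} of a finite field L of characteristic 2 containing it:
   the fixed points of x |-> x^(2^k). *)
Definition subF (L : finFieldType) (k : nat) : pred L :=
  [pred x : L | x ^+ (2 ^ k) == x].

Definition bincomb (L : finFieldType) (k : nat) (a : 'I_k -> L) (S : {set 'I_k}) : L :=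
  \sum_(i in S) a i.

Definition F2basis (L : finFieldType) (k : nat) (a : 'I_k -> L) : Prop :=
  (forall i, a i \in @subF L k) /\
  (forall S : {set 'I_k}, bincomb a S = 0 -> S = set0).

(* Coefficient of the monomial prod_{i in S1} x_i prod_{j in S2} y_j in the
   algebraic normal form of f (Moebius transform), with x = sum x_i alpha_i,
   y = sum y_j beta_j. *)
Definition anf_coef (L : finFieldType) (n1 n2 : nat)
  (alpha : 'I_n1 -> L) (beta : 'I_n2 -> L) (f : L -> L -> bool)
  (S1 : {set 'I_n1}) (S2 : {set 'I_n2}) : bool :=
  odd (\sum_(T1 : {set 'I_n1} | T1 \subset S1)
         \sum_(T2 : {set 'I_n2} | T2 \subset S2)
            f (bincomb alpha T1) (bincomb beta T2)).

(* algebraic degree: max total degree of a monomial with nonzero ANF coefficient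
   (0 for the zero function) *)
Definition alg_deg (L : finFieldType) (n1 n2 : nat)
  (alpha : 'I_n1 -> L) (beta : 'I_n2 -> L) (f : L -> L -> bool) : nat :=
  (\max_(S1 : {set 'I_n1}) \max_(S2 : {set 'I_n2} | anf_coef alpha beta f S1 S2)
      (#|S1| + #|S2|))%N.

Definition wt (k i : nat) : nat := (\sum_(t < k) (i %/ 2 ^ t) %% 2)%N.

From mathcomp Require Import all_boot all_order all_algebra all_field.
From mathcomp Require Import zify.

(* Index the exponents [0 <= i < 2 ^ n] by the subsets [I] of ['I_n], with
   [i = \sum_(t in I) 2 ^ t], so that [wt n i = #|I|].  As [x |-> x ^+ 2 ^ t] is
   additive in characteristic 2, [x ^+ i] is a product of [#|I|] linear forms in
   the binary coordinates of [x]; hence the algebraic normal form of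
   [x ^+ i * y ^+ j] only has monomials of degree at most [#|I| + #|J|], i.e. the
   Moebius transform [anf] of the values does not increase the degree.  It is
   injective (Moebius inversion, then a polynomial with [2 ^ n] distinct exponents
   below [2 ^ n] vanishing on the [2 ^ n] points of a subfield is zero), so it
   permutes the finite set of coefficient vectors of degree at most [d] and cannot
   decrease the degree either. *)

Set Implicit Arguments.
Unset Strict Implicit.
Unset Printing Implicit Defensive.

Import GRing.Theory.
Local Open Scope ring_scope.

Definition nat_of_bits (b : nat -> bool) (n : nat) : nat :=
  (\sum_(t < n) b t * 2 ^ t)%N.

Lemma nat_of_bitsS b n :
  nat_of_bits b n.+1 = (b 0%N + 2 * nat_of_bits (fun t => b t.+1) n)%N.
Proof.
rewrite /nat_of_bits big_ord_recl expn0 muln1 big_distrr /=; congr (_ + _)%N.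
by apply: eq_bigr => i _; rewrite /bump /= add1n expnS mulnCA.
Qed.

Lemma nat_of_bits_lt b n : (nat_of_bits b n < 2 ^ n)%N.
Proof.
elim: n b => [|n IHn] b; first by rewrite /nat_of_bits big_ord0.
by rewrite nat_of_bitsS expnS; have := IHn (fun t => b t.+1); case: (b 0%N); lia.
Qed.

Lemma nat_of_bits_digit b n t :
  (t < n)%N -> (nat_of_bits b n %/ 2 ^ t %% 2)%N = b t.
Proof.
elim: n b t => [|n IHn] b [|t] //= lt_tn; rewrite nat_of_bitsS.
  by rewrite expn0 divn1 addnC mulnC modnMDl; case: (b 0%N).
rewrite expnS divnMA addnC mulnC divnMDl // (divn_small (_ : b 0%N < 2)%N).
  by rewrite addn0 IHn.
by case: (b 0%N).
Qed.

Section SetNum.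
Variable n : nat.

Definition setnum (I : {set 'I_n}) : nat := (\sum_(t in I) 2 ^ t)%N.

Lemma setnum_bits I : setnum I = nat_of_bits (mem [seq val i | i in I]) n.
Proof.
rewrite /setnum /nat_of_bits big_mkcond /=; apply: eq_bigr => i _.
by rewrite (mem_image val_inj); case: (i \in I); rewrite ?mul1n.
Qed.

Lemma setnum_lt I : (setnum I < 2 ^ n)%N.
Proof. by rewrite setnum_bits nat_of_bits_lt. Qed.

Lemma setnum_digit I (i : 'I_n) : (setnum I %/ 2 ^ i %% 2)%N = (i \in I).
Proof. by rewrite setnum_bits nat_of_bits_digit //= (mem_image val_inj). Qed.

Lemma setnum_inj : injective setnum.
Proof.
move=> I J eqIJ; apply/setP => i.
by have := setnum_digit I i; rewrite eqIJ setnum_digit; case: (i \in I); case: (i \in J).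
Qed.

Lemma wt_setnum I : wt n (setnum I) = #|I|.
Proof.
rewrite /wt -sum1_card [in RHS]big_mkcond /=; apply: eq_bigr => i _.
by rewrite setnum_digit; case: (i \in I).
Qed.

Definition ord_setnum (I : {set 'I_n}) : 'I_(2 ^ n) := Ordinal (setnum_lt I).

Lemma card_set_ord : #|{set 'I_n}| = (2 ^ n)%N.
Proof. by rewrite -cardsT -powersetT card_powerset cardsT card_ord. Qed.

Lemma ord_setnum_bij : bijective ord_setnum.
Proof.
apply: inj_card_bij; last by rewrite card_set_ord card_ord.
by move=> I J /(congr1 val) /setnum_inj.
Qed.

Lemma big_setnum (R : Type) (idx : R) (op : Monoid.com_law idx)
    (P : pred 'I_(2 ^ n)) (F : 'I_(2 ^ n) -> R) :
  \big[op/idx]_(i | P i) F i = \big[op/idx]_(I | P (ord_setnum I)) F (ord_setnum I).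
Proof. exact/reindex/onW_bij/ord_setnum_bij. Qed.

End SetNum.

Lemma expr2n_sum (R : comNzRingType) (pchar2 : 2%N \in [pchar R])
    (I : Type) (r : seq I) (P : pred I) (F : I -> R) t :
  (\sum_(i <- r | P i) F i) ^+ (2 ^ t) = \sum_(i <- r | P i) F i ^+ (2 ^ t).
Proof.
elim: t => [|t IHt]; first by rewrite expn0 expr1; apply: eq_bigr => i _; rewrite expr1.
rewrite expnSr exprM IHt -(pFrobenius_autE pchar2) rmorph_sum.
by apply: eq_bigr => i _; rewrite /= pFrobenius_autE exprM.
Qed.

(* Toggling [k] pairs off the sets between [A] and [S]. *)
Lemma sum_subset_interval_pchar2 (R : nzSemiRingType) (T : finType) (A S : {set T}) k :
  2%N \in [pchar R] -> k \in S -> k \notin A ->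
  \sum_(X : {set T} | (X \subset S) && (A \subset X)) 1 = 0 :> R.
Proof.
move=> pchar2 kS kA; rewrite (@bigID _ _ _ _ (index_enum {set T}) (fun X => k \in X)) /=.
rewrite (reindex_onto (fun X => k |: X) (fun X => X :\ k)) /=; last first.
  by move=> X /andP[_ kX]; rewrite setD1K.
rewrite (@eq_bigl _ _ _ _ (index_enum {set T}) _
  (fun X => (X \subset S) && (A \subset X) && (k \notin X))).
  exact: addrr_pchar2.
move=> X /=; rewrite !inE eqxx /=.
have [kX|kX] := boolP (k \in X); rewrite /= ?andbT ?andbF.
  apply/negbTE/negP => /andP[_ /eqP XE].
  by move: kX; rewrite -XE !inE eqxx.
rewrite setU1K // eqxx andbT subUset sub1set kS /=.
congr andb; apply/idP/idP => [sAkX|sAX]; last exact: subset_trans sAX (subsetUr _ _).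
apply/subsetP => x xA; move: (subsetP sAkX x xA); rewrite !inE.
by case: eqP => [xk|] //; move: kA; rewrite -xk xA.
Qed.

Lemma prod_mem_natr (R : comNzSemiRingType) (T U : finType) (I : {set T}) (f : T -> U)
    (B : {set U}) :
  \prod_(t in I) ((f t \in B)%:R : R) = (f @: I \subset B)%:R.
Proof.
have [sfIB|/subsetPn[_ /imsetP[t tI ->] ftB]] := boolP (f @: I \subset B).
  by apply: big1 => t tI; rewrite (subsetP sfIB) ?imset_f.
by rewrite (bigD1 t) //= (negbTE ftB) mul0r.
Qed.

Section BincombPowers.
Variable L : finFieldType.
Hypothesis pchar2 : 2%N \in [pchar L].
Variables (n : nat) (a : 'I_n -> L).

(* Frobenius makes [x ^+ 2 ^ t] additive, so [x ^+ setnum I] is a product of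
   |I| linear forms in the coordinates of [x]. *)
Lemma expr_setnum_bincomb (I T : {set 'I_n}) (j0 : 'I_n) :
  bincomb a T ^+ setnum I =
  \sum_(f in pffun_on j0 (mem I) predT)
     (f @: I \subset T)%:R * \prod_(t in I) a (f t) ^+ (2 ^ t).
Proof.
rewrite -prodrXr /bincomb.
under eq_bigr do rewrite (expr2n_sum pchar2) big_mkcond /=.
rewrite (big_distr_big j0) /=; apply: eq_bigr => f _.
rewrite -prod_mem_natr -big_split /=; apply: eq_bigr => t _.
by case: (f t \in T); rewrite ?mul1r ?mul0r.
Qed.

Lemma sum_subset_expr_bincomb_eq0 (I S : {set 'I_n}) : (#|I| < #|S|)%N ->
  \sum_(T : {set 'I_n} | T \subset S) bincomb a T ^+ setnum I = 0.
Proof.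
move=> ltIS; have [j0 _] := card_gt0P (leq_ltn_trans (leq0n _) ltIS).
under eq_bigr do rewrite (expr_setnum_bincomb _ _ j0).
rewrite exchange_big /=; apply: big1 => f _; rewrite -big_distrl /=.
have [k kS kfI] : exists2 k, k \in S & k \notin f @: I.
  apply/subsetPn; apply: contraTN ltIS => sSfI; rewrite -leqNgt.
  exact: leq_trans (subset_leq_card sSfI) (leq_imset_card _ _).
suff -> : \sum_(T : {set 'I_n} | T \subset S) ((f @: I \subset T)%:R : L) = 0.
  by rewrite mul0r.
rewrite -[RHS](sum_subset_interval_pchar2 pchar2 kS kfI) big_mkcondr /=.
by apply: eq_bigr => T _; case: (_ \subset T).
Qed.

Lemma bincomb_inj : (forall S, bincomb a S = 0 -> S = set0) -> injective (bincomb a).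
Proof.
move=> bincomb_eq0 S T eqST.
pose D := [set i | (i \in S) (+) (i \in T)].
have bincombE U : bincomb a U = \sum_i (i \in U)%:R * a i.
  rewrite /bincomb big_mkcond; apply: eq_bigr => i _.
  by case: (i \in U); rewrite ?mul1r ?mul0r.
have /bincomb_eq0 D0 : bincomb a D = 0.
  rewrite -(addrr_pchar2 pchar2 (bincomb a S)) {2}eqST !bincombE -big_split.
  apply: eq_bigr => i _; rewrite /= inE -mulrDl.
  by case: (i \in S); case: (i \in T); rewrite ?addr0 ?add0r ?(addrr_pchar2 pchar2).
apply/setP => i; have : i \notin D by rewrite D0 inE.
by rewrite inE; case: (i \in S); case: (i \in T).
Qed.

End BincombPowers.

Lemma subF_bincomb (L : finFieldType) (pchar2 : 2%N \in [pchar L]) k n (a : 'I_n -> L) :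
  (forall i, a i \in @subF L k) -> forall T, bincomb a T \in @subF L k.
Proof.
move=> a_subF T; rewrite inE /bincomb (expr2n_sum pchar2); apply/eqP/eq_bigr => i _.
by apply/eqP; have := a_subF i; rewrite inE.
Qed.

Lemma sum_powers_inj (R : idomainType) (X Y : finType) (e : X -> nat) (z : Y -> R)
    (u1 u2 : X -> R) :
  injective e -> injective z -> (forall x, e x < #|Y|)%N ->
  (forall y, \sum_x u1 x * z y ^+ e x = \sum_x u2 x * z y ^+ e x) -> u1 =1 u2.
Proof.
move=> inj_e inj_z lt_e eq_u x0; apply/eqP; rewrite -subr_eq0; apply/eqP.
pose p := \sum_x (u1 x - u2 x) *: 'X^(e x).
have p0 : p = 0.
  apply: (@roots_geq_poly_eq0 _ _ [seq z y | y : Y]).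
  - apply/allP => _ /mapP[y _ ->]; rewrite /root /p horner_sum.
    under eq_bigr do rewrite hornerZ hornerXn mulrBl.
    by rewrite sumrB eq_u subrr.
  - by rewrite map_inj_uniq ?enum_uniq.
  rewrite size_map -cardE; apply: leq_trans (size_sum _ _ _) _.
  apply/bigmax_leqP => x _; apply: leq_trans (size_scale_leq _ _) _.
  by rewrite size_polyXn.
have := congr1 (fun q : {poly R} => q`_(e x0)) p0.
rewrite coef0 /p coef_sum (bigD1 x0) //= coefZ coefXn eqxx mulr1 big1 ?addr0 //.
by move=> x neq_x; rewrite coefZ coefXn (inj_eq inj_e) eq_sym (negbTE neq_x) mulr0.
Qed.

Lemma subset_sum_inj (T : finType) (V : zmodType) (G1 G2 : {set T} -> V) :
  (forall S : {set T},
     \sum_(X : {set T} | X \subset S) G1 X = \sum_(X : {set T} | X \subset S) G2 X) ->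
  G1 =1 G2.
Proof.
move=> eq_sum S; elim: {S}#|S|.+1 {-2}S (ltnSn #|S|) => // m IHm S ltSm.
have := eq_sum S; rewrite (bigD1 S) //= [in RHS](bigD1 S) //=.
rewrite (eq_bigr G2) => [/addIr //|X /andP[sXS neXS]].
have XpS : X \proper S by rewrite properEneq neXS.
by apply: IHm; apply: leq_trans (proper_card XpS) _; rewrite -ltnS.
Qed.

Lemma mem_of_inj_stable (T : finType) (f : T -> T) (A : {set T}) x :
  injective f -> f @: A \subset A -> f x \in A -> x \in A.
Proof.
move=> inj_f sfAA.
have /eqP fAA : f @: A == A by rewrite eqEcard sfAA (card_imset _ inj_f) leqnn.
by rewrite -{1}fAA mem_imset.
Qed.

Section AlgebraicNormalForm.
Variable L : finFieldType.
Hypothesis pchar2 : 2%N \in [pchar L].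
Variables (n1 n2 : nat) (alpha : 'I_n1 -> L) (beta : 'I_n2 -> L).

Definition biset := ({set 'I_n1} * {set 'I_n2})%type.
Local Notation coefs := {ffun biset -> L}.

Definition bipoly_eval (w : coefs) (x y : L) : L :=
  \sum_(I : {set 'I_n1}) \sum_(J : {set 'I_n2}) w (I, J) * x ^+ setnum I * y ^+ setnum J.

Definition anf (w : coefs) : coefs := [ffun S : biset =>
  \sum_(T1 : {set 'I_n1} | T1 \subset S.1) \sum_(T2 : {set 'I_n2} | T2 \subset S.2)
     bipoly_eval w (bincomb alpha T1) (bincomb beta T2)].

Definition bideg (w : coefs) : nat :=
  (\max_(I : {set 'I_n1}) \max_(J : {set 'I_n2} | w (I, J) != 0%R) (#|I| + #|J|))%N.

Lemma bideg_leP d (w : coefs) :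
  reflect (forall I J, w (I, J) != 0 -> (#|I| + #|J| <= d)%N) (bideg w <= d)%N.
Proof.
apply: (iffP idP) => [le_wd I J nzIJ | le_IJ].
  by apply: leq_trans le_wd; apply: leq_trans (leq_bigmax I); apply: leq_bigmax_cond.
by apply/bigmax_leqP => I _; apply/bigmax_leqP => J; apply: le_IJ.
Qed.

Lemma bipoly_evalE (w : coefs) x y :
  bipoly_eval w x y =
  \sum_(I : {set 'I_n1})
    (\sum_(J : {set 'I_n2}) w (I, J) * y ^+ setnum J) * x ^+ setnum I.
Proof.
apply: eq_bigr => I _; rewrite big_distrl /=.
by apply: eq_bigr => J _; rewrite mulrAC.
Qed.

Lemma anfE (w : coefs) (S : biset) :
  anf w S = \sum_(I : {set 'I_n1}) \sum_(J : {set 'I_n2})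
    w (I, J) * (\sum_(T1 : {set 'I_n1} | T1 \subset S.1) bincomb alpha T1 ^+ setnum I)
             * (\sum_(T2 : {set 'I_n2} | T2 \subset S.2) bincomb beta T2 ^+ setnum J).
Proof.
rewrite ffunE; symmetry.
under eq_bigr do under eq_bigr do rewrite -mulrA big_distrlr big_distrr /=.
under eq_bigr do under eq_bigr do under eq_bigr do rewrite big_distrr /=.
under eq_bigr do rewrite exchange_big /=.
rewrite exchange_big; apply: eq_bigr => T1 _.
under eq_bigr do rewrite exchange_big /=.
rewrite exchange_big; apply: eq_bigr => T2 _.
by do 2![apply: eq_bigr => ? _]; rewrite mulrA.
Qed.

Lemma bideg_anf_le (w : coefs) : (bideg (anf w) <= bideg w)%N.
Proof.
have /bideg_leP le_w := leqnn (bideg w).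
apply/bideg_leP => S1 S2; apply: contraNT; rewrite -ltnNge => lt_deg.
rewrite anfE; apply/eqP/big1 => I _; apply/big1 => J _.
have [->|/le_w le_IJ] := eqVneq (w (I, J)) 0; first by rewrite !mul0r.
have [ltI|geI] := ltnP #|I| #|S1|.
  by rewrite (sum_subset_expr_bincomb_eq0 pchar2 alpha ltI) mulr0 mul0r.
have ltJ : (#|J| < #|S2|)%N by lia.
by rewrite (sum_subset_expr_bincomb_eq0 pchar2 beta ltJ) mulr0.
Qed.

Lemma anf_inj : injective (bincomb alpha) -> injective (bincomb beta) -> injective anf.
Proof.
move=> inj_a inj_b w1 w2 eq_anf.
have eq_eval T1 T2 : bipoly_eval w1 (bincomb alpha T1) (bincomb beta T2) =
                     bipoly_eval w2 (bincomb alpha T1) (bincomb beta T2).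
  move: T2; apply: subset_sum_inj => S2; move: T1; apply: subset_sum_inj => S1.
  by have := congr1 (fun w : coefs => w (S1, S2)) eq_anf; rewrite !ffunE.
apply/ffunP => -[I J].
have lt_card n (K : {set 'I_n}) : (setnum K < #|{set 'I_n}|)%N.
  by rewrite card_set_ord setnum_lt.
move: J; apply: (sum_powers_inj (@setnum_inj _) inj_b (@lt_card _)) => T2.
move: I; apply: (sum_powers_inj (@setnum_inj _) inj_a (@lt_card _)) => T1.
by rewrite -!bipoly_evalE.
Qed.

Lemma bideg_anf : injective (bincomb alpha) -> injective (bincomb beta) ->
  forall w : coefs, bideg (anf w) = bideg w.
Proof.
move=> inj_a inj_b w; apply/eqP; rewrite eqn_leq bideg_anf_le /=.
pose low := [set v | bideg v <= bideg (anf w)]%N.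
suff: w \in low by rewrite inE.
apply: (mem_of_inj_stable (anf_inj inj_a inj_b)); last by rewrite inE.
apply/subsetP => _ /imsetP[v v_low ->]; rewrite !inE in v_low *.
exact: leq_trans (bideg_anf_le v) v_low.
Qed.

End AlgebraicNormalForm.

Theorem proposition1 (n1 n2 : nat) (L : finFieldType)
  (hn1 : (1 <= n1)%N) (hn2 : (1 <= n2)%N)
  (hchar : 2%N \in [pchar L]) (hcard : #|L| = (2 ^ lcmn n1 n2)%N)
  (alpha : 'I_n1 -> L) (beta : 'I_n2 -> L)
  (halpha : F2basis alpha) (hbeta : F2basis beta)
  (f : L -> L -> bool) (c : nat -> nat -> L)
  (hrep : forall x y : L, x \in @subF L n1 -> y \in @subF L n2 ->
     (f x y)%:R = \sum_(i < 2 ^ n1) \sum_(j < 2 ^ n2) c i j * x ^+ i * y ^+ j) :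
  alg_deg alpha beta f =
  (\max_(i < 2 ^ n1) \max_(j < 2 ^ n2 | c i j != 0%R) (wt n1 i + wt n2 j))%N.
Proof.
have inj_alpha := bincomb_inj hchar halpha.2.
have inj_beta := bincomb_inj hchar hbeta.2.
pose w : {ffun biset n1 n2 -> L} := [ffun k => c (setnum k.1) (setnum k.2)].
have anf_coefE S1 S2 : (anf_coef alpha beta f S1 S2)%:R = anf alpha beta w (S1, S2).
  rewrite /anf_coef -modn2 (GRing.natr_mod_pchar hchar) ffunE natr_sum.
  apply: eq_bigr => T1 _; rewrite natr_sum; apply: eq_bigr => T2 _.
  rewrite hrep ?(subF_bincomb hchar halpha.1) ?(subF_bincomb hchar hbeta.1) //.
  rewrite /bipoly_eval big_setnum; apply: eq_bigr => I _.
  by rewrite big_setnum; apply: eq_bigr => J _; rewrite ffunE.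
transitivity (bideg (anf alpha beta w)).
  apply: eq_bigr => S1 _; apply: eq_bigl => S2.
  by rewrite -anf_coefE; case: anf_coef; rewrite ?oner_eq0 ?eqxx.
rewrite bideg_anf // big_setnum; apply: eq_bigr => I _.
by rewrite big_setnum; apply: eq_big => [J|J _]; rewrite ?ffunE /= ?wt_setnum.
Qed.
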